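(* Fix real numbers $L,\ell_1,\ell_2>0$. There is a unique set map $B_L^{\ell_1,\ell_2}:\mathcal{G}(L,\ell_1+\ell_2)\to\mathcal{G}(L,\ell_2+\ell_1)$ such that $B_L^{\ell_1,\ell_2}(\phi_1\otimes\phi_2)=\phi_2\otimes\phi_1$ for all $\ell'_1,\ell'_2>0$ with $\ell'_1+\ell'_2=L$ and all $\phi_1\in\mathcal{G}(\ell'_1,\ell_1)$, $\phi_2\in\mathcal{G}(\ell'_2,\ell_2)$. Moreover, $B_L^{\ell_1,\ell_2}$ is a homeomorphism.
   Context: $\mathcal{G}$ is the category whose objects are the real numbers $\ell>0$, with $\mathcal{G}(\ell_1,\ell_2)$ the set of nondecreasing homeomorphisms $[0,\ell_1]\to[0,\ell_2]$ (necessarily sending $0\mapsto0$, $\ell_1\mapsto\ell_2$), equipped with the compact-open topology, and composition given by composition of maps. For $\phi_i:[0,\ell_i]\to[0,\ell'_i]$ ($i=1,2$), $\phi_1\otimes\phi_2:[0,\ell_1+\ell_2]\to[0,\ell'_1+\ell'_2]$ is defined by $(\phi_1\otimes\phi_2)(t)=\phi_1(t)$ for $0\le t\le\ell_1$ and $\phi_2(t-\ell_1)+\ell'_1$ for $\ell_1\le t\le\ell_1+\ell_2$. Note $\ell_1+\ell_2=\ell_2+\ell_1$ as objects, so $B_L^{\ell_1,\ell_2}$ is a self-map of the space $\mathcal{G}(L,\ell_1+\ell_2)$. *)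

From Stdlib Require Import Reals Lra.
Open Scope R_scope.

Definition in0 (a t : R) : Prop := 0 <= t <= a.

Definition cont_on (a : R) (f : R -> R) : Prop :=
  forall x, in0 a x -> forall eps, 0 < eps ->
    exists delta, 0 < delta /\
      forall y, in0 a y -> Rabs (y - x) < delta -> Rabs (f y - f x) < eps.

Definition ndhomeo (a b : R) (f : R -> R) : Prop :=
  (forall t, in0 a t -> in0 b (f t)) /\
  (forall s t, in0 a s -> in0 a t -> s <= t -> f s <= f t) /\
  cont_on a f /\
  exists g : R -> R,
    (forall s, in0 b s -> in0 a (g s)) /\
    (forall t, in0 a t -> g (f t) = t) /\
    (forall s, in0 b s -> f (g s) = s) /\
    cont_on b g.

(* An element is represented by a function
   R -> R whose restriction to [0,a] is the homeomorphism; outside [0,a]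
   it is normalized to be 0 on t < 0 and b on t > a, so that elements of
   G(a,b) correspond bijectively to maps [0,a] -> [0,b]. *)
Definition G (a b : R) (f : R -> R) : Prop :=
  ndhomeo a b f /\ (forall t, t < 0 -> f t = 0) /\ (forall t, a < t -> f t = b).

Definition tensor (a1 b1 : R) (phi1 phi2 : R -> R) : R -> R :=
  fun t => if Rle_dec t a1 then phi1 t else phi2 (t - a1) + b1.

(* Compact-open topology on G(a,b) = topology of uniform convergence on [0,a].
   Continuity of a self-map F of G(a,b) w.r.t. this topology. *)
Definition sup_continuous (a b : R) (F : (R -> R) -> (R -> R)) : Prop :=
  forall f, G a b f -> forall eps, 0 < eps ->
    exists delta, 0 < delta /\
      forall g, G a b g ->
        (forall t, in0 a t -> Rabs (g t - f t) <= delta) ->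
        forall t, in0 a t -> Rabs (F g t - F f t) <= eps.

Definition braid_prop (L l1 l2 : R) (B : (R -> R) -> (R -> R)) : Prop :=
  (forall f, G L (l1 + l2) f -> G L (l2 + l1) (B f)) /\
  forall l1' l2', 0 < l1' -> 0 < l2' -> l1' + l2' = L ->
    forall phi1 phi2, G l1' l1 phi1 -> G l2' l2 phi2 ->
      B (tensor l1' l1 phi1 phi2) = tensor l2' l2 phi2 phi1.

(* An element f of G(L, l1 + l2) reaches the value l1 at exactly one point
   s of (0, L), and cutting there writes f = phi1 (x) phi2 with phi1 in
   G(s, l1) and phi2 in G(L - s, l2).  Hence B must send f to phi2 (x) phi1,
   which gives existence and uniqueness, and the same construction with l1
   and l2 exchanged inverts it.  Because f is strictly increasing, the cut
   point depends continuously on f for the uniform distance; together with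
   B f t = f (t + s) + f (t + s - L) - l1 and the uniform continuity of f this
   gives continuity of B.  Membership in G never requires checking continuity:
   a strictly increasing map of [0, a] onto [0, b] is automatically a
   homeomorphism. *)

From Stdlib Require Import Reals Lra ClassicalEpsilon FunctionalExtensionality.
Open Scope R_scope.

Ltac in0_lra := unfold in0 in *; lra.

Lemma Rabs_le_inv x a : Rabs x <= a -> - a <= x <= a.
Proof. unfold Rabs; destruct Rcase_abs; lra. Qed.

Section MonotoneOnto.
Variables (a b : R) (f : R -> R).
Hypothesis f_range : forall t, in0 a t -> in0 b (f t).
Hypothesis f_mono : forall s t, in0 a s -> in0 a t -> s <= t -> f s <= f t.
Hypothesis f_onto : forall y, in0 b y -> exists t, in0 a t /\ f t = y.

(* A monotone map onto an interval has no jumps: the values f x +- eps/2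
   are attained at points on either side of x. *)
Lemma monotone_onto_upper x eps : in0 a x -> 0 < eps ->
  exists d, 0 < d /\ forall y, in0 a y -> y < x + d -> f y < f x + eps.
Proof.
  intros Hx He. pose proof (f_range x Hx).
  destruct (Rlt_dec (f x + eps / 2) b) as [Hlt | Hge].
  - destruct (f_onto (f x + eps / 2)) as [u [Hu Hfu]]; [in0_lra |].
    assert (x < u).
    { destruct (Rlt_le_dec x u) as [|Hux]; [assumption |].
      pose proof (f_mono u x Hu Hx Hux); lra. }
    exists (u - x); split; [lra |].
    intros y Hy Hyu. pose proof (f_mono y u Hy Hu ltac:(lra)); lra.
  - exists 1; split; [lra |]. intros y Hy _. pose proof (f_range y Hy); in0_lra.
Qed.

Lemma monotone_onto_lower x eps : in0 a x -> 0 < eps ->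
  exists d, 0 < d /\ forall y, in0 a y -> x - d < y -> f x - eps < f y.
Proof.
  intros Hx He. pose proof (f_range x Hx).
  destruct (Rlt_dec 0 (f x - eps / 2)) as [Hlt | Hge].
  - destruct (f_onto (f x - eps / 2)) as [u [Hu Hfu]]; [in0_lra |].
    assert (u < x).
    { destruct (Rlt_le_dec u x) as [|Hxu]; [assumption |].
      pose proof (f_mono x u Hx Hu Hxu); lra. }
    exists (x - u); split; [lra |].
    intros y Hy Huy. pose proof (f_mono u y Hu Hy ltac:(lra)); lra.
  - exists 1; split; [lra |]. intros y Hy _. pose proof (f_range y Hy); in0_lra.
Qed.

Lemma monotone_onto_cont_on : cont_on a f.
Proof.
  intros x Hx eps He.
  destruct (monotone_onto_upper x eps Hx He) as [d1 [Hd1 Hup]].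
  destruct (monotone_onto_lower x eps Hx He) as [d2 [Hd2 Hlow]].
  exists (Rmin d1 d2); split; [apply Rmin_glb_lt; assumption |].
  intros y Hy Hyx. apply Rabs_def2 in Hyx.
  pose proof (Rmin_l d1 d2). pose proof (Rmin_r d1 d2).
  apply Rabs_def1.
  - pose proof (Hup y Hy ltac:(lra)); lra.
  - pose proof (Hlow y Hy ltac:(lra)); lra.
Qed.

End MonotoneOnto.

Section StrictlyMonotone.
Variables (a : R) (f : R -> R).
Hypothesis f_strict : forall s t, in0 a s -> in0 a t -> s < t -> f s < f t.

Lemma strict_mono s t : in0 a s -> in0 a t -> s <= t -> f s <= f t.
Proof.
  intros Hs Ht [Hst | ->]; [apply Rlt_le, f_strict |]; auto using Rle_refl.
Qed.

Lemma strict_le_reflect s t : in0 a s -> in0 a t -> f s <= f t -> s <= t.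
Proof.
  intros Hs Ht Hf. destruct (Rle_lt_dec s t) as [|Hts]; [assumption |].
  pose proof (f_strict t s Ht Hs Hts); lra.
Qed.

Lemma strict_inj s t : in0 a s -> in0 a t -> f s = f t -> s = t.
Proof.
  intros Hs Ht Hf. apply Rle_antisym; apply strict_le_reflect; auto; lra.
Qed.

End StrictlyMonotone.

(* An arbitrary real when y has no preimage in [0, a]. *)
Definition preimage (a y : R) (f : R -> R) : R :=
  epsilon (inhabits 0) (fun t => in0 a t /\ f t = y).

Lemma preimage_spec a y f : (exists t, in0 a t /\ f t = y) ->
  in0 a (preimage a y f) /\ f (preimage a y f) = y.
Proof. exact (epsilon_spec (inhabits 0) (fun t => in0 a t /\ f t = y)). Qed.

Lemma G_intro a b f :
  (forall t, in0 a t -> in0 b (f t)) ->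
  (forall s t, in0 a s -> in0 a t -> s < t -> f s < f t) ->
  (forall y, in0 b y -> exists t, in0 a t /\ f t = y) ->
  (forall t, t < 0 -> f t = 0) -> (forall t, a < t -> f t = b) ->
  G a b f.
Proof.
  intros Hr Hs Ho Hl Hh.
  pose proof (strict_mono a f Hs) as Hm.
  set (g y := preimage a y f).
  assert (Hgr : forall y, in0 b y -> in0 a (g y) /\ f (g y) = y)
    by (intros y Hy; apply preimage_spec, Ho, Hy).
  assert (Hgf : forall t, in0 a t -> g (f t) = t).
  { intros t Ht. destruct (Hgr (f t) (Hr t Ht)) as [Hg Hfg].
    apply (strict_inj a f Hs); assumption. }
  assert (Hgm : forall y z, in0 b y -> in0 b z -> y <= z -> g y <= g z).
  { intros y z Hy Hz Hyz. destruct (Hgr y Hy) as [Hy' Hfy]. destruct (Hgr z Hz) as [Hz' Hfz].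
    apply (strict_le_reflect a f Hs); [assumption | assumption | lra]. }
  split; [| split; assumption].
  split; [assumption | split; [assumption | split]].
  - apply (monotone_onto_cont_on a b); assumption.
  - exists g. split; [| split; [assumption | split]].
    1, 2: intros y Hy; apply Hgr, Hy.
    + apply (monotone_onto_cont_on b a); [intros y Hy; apply Hgr, Hy | assumption |].
      intros t Ht. exists (f t). auto.
Qed.

Section GProperties.
Variables (a b : R) (f : R -> R).
Hypothesis Hf : G a b f.

Lemma G_range t : in0 a t -> in0 b (f t).
Proof. apply Hf. Qed.

Lemma G_mono s t : in0 a s -> in0 a t -> s <= t -> f s <= f t.
Proof. apply Hf. Qed.

Lemma G_cont_on : cont_on a f.
Proof. apply Hf. Qed.

Lemma G_onto y : in0 b y -> exists t, in0 a t /\ f t = y.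
Proof.
  intros Hy. destruct Hf as [[_ [_ [_ [g [Hgr [_ [Hfg _]]]]]]] _].
  exists (g y); auto.
Qed.

Lemma G_strict s t : in0 a s -> in0 a t -> s < t -> f s < f t.
Proof.
  intros Hs Ht Hst. destruct Hf as [[_ [_ [_ [g [_ [Hgf _]]]]]] _].
  destruct (G_mono s t Hs Ht (Rlt_le _ _ Hst)) as [| Heq]; [assumption |].
  rewrite <- (Hgf s Hs), <- (Hgf t Ht), Heq in Hst; lra.
Qed.

Lemma G_le_reflect s t : in0 a s -> in0 a t -> f s <= f t -> s <= t.
Proof. apply strict_le_reflect, G_strict. Qed.

Lemma G_preimage y : in0 b y -> in0 a (preimage a y f) /\ f (preimage a y f) = y.
Proof. intros Hy. apply preimage_spec, G_onto, Hy. Qed.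

Lemma G_preimage_eq y t : in0 a t -> f t = y -> preimage a y f = t.
Proof.
  intros Ht <-. destruct (G_preimage (f t) (G_range t Ht)) as [Hp Hfp].
  apply (strict_inj a f G_strict); assumption.
Qed.

Hypothesis Ha : 0 <= a.

Lemma G_at0 : f 0 = 0.
Proof.
  assert (H0 : in0 a 0) by in0_lra.
  pose proof (G_range 0 H0).
  destruct (G_onto 0) as [t [Ht Hft]]; [in0_lra |].
  pose proof (G_mono 0 t H0 Ht ltac:(in0_lra)); in0_lra.
Qed.

Lemma G_at_end : f a = b.
Proof.
  assert (Ha' : in0 a a) by in0_lra.
  pose proof (G_range a Ha').
  destruct (G_onto b) as [t [Ht Hft]]; [in0_lra |].
  pose proof (G_mono t a Ht Ha' ltac:(in0_lra)); in0_lra.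
Qed.

Lemma G_codomain_nonneg : 0 <= b.
Proof. pose proof (G_range 0 ltac:(in0_lra)); in0_lra. Qed.

Lemma G_preimage_interior y : 0 < y < b -> 0 < preimage a y f < a.
Proof.
  intros Hy. destruct (G_preimage y ltac:(in0_lra)) as [Hp Hfp].
  destruct (Req_dec (preimage a y f) 0) as [E | E]; [rewrite E, G_at0 in Hfp; lra |].
  destruct (Req_dec (preimage a y f) a) as [E' | E']; [rewrite E', G_at_end in Hfp; lra |].
  in0_lra.
Qed.

Lemma G_nonpos t : t <= 0 -> f t = 0.
Proof.
  intros [Ht | ->]; [apply Hf, Ht | apply G_at0].
Qed.

Lemma G_beyond t : a <= t -> f t = b.
Proof.
  intros [Ht | <-]; [apply Hf, Ht | apply G_at_end].
Qed.

Definition clamp (x : R) : R := Rmax 0 (Rmin a x).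

Lemma clamp_in x : in0 a (clamp x).
Proof. unfold clamp, Rmax, Rmin; repeat destruct Rle_dec; in0_lra. Qed.

Lemma clamp_id x : in0 a x -> clamp x = x.
Proof. unfold clamp, Rmax, Rmin; repeat destruct Rle_dec; in0_lra. Qed.

Lemma clamp_lipschitz x y : Rabs (clamp x - clamp y) <= Rabs (x - y).
Proof. unfold clamp, Rmax, Rmin, Rabs; repeat destruct Rle_dec; repeat destruct Rcase_abs; lra. Qed.

Lemma G_clamp x : f (clamp x) = f x.
Proof.
  unfold clamp, Rmax, Rmin; repeat destruct Rle_dec; try lra.
  - rewrite G_at_end, G_beyond by lra; reflexivity.
  - rewrite G_at0, G_nonpos by lra; reflexivity.
Qed.

Lemma G_unif_cont eps : 0 < eps ->
  exists d, 0 < d /\ forall x y, Rabs (x - y) < d -> Rabs (f x - f y) < eps.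
Proof.
  intros He.
  assert (Hcont : forall x, 0 <= x <= a -> continuity_pt f x).
  { intros x Hx e He'. destruct (G_cont_on x Hx e He') as [d [Hd Hclose]].
    exists d; split; [assumption |]. intros y [_ Hy]. simpl in *; unfold R_dist in *.
    rewrite <- (G_clamp y).
    apply Hclose; [apply clamp_in |].
    pose proof (clamp_lipschitz y x) as Hlip. rewrite (clamp_id x Hx) in Hlip. lra. }
  destruct (Heine_cor2 Hcont (mkposreal eps He)) as [[d Hd] Hunif]; simpl in Hunif.
  exists d; split; [assumption |]. intros x y Hxy.
  rewrite <- (G_clamp x), <- (G_clamp y).
  apply Hunif; try apply clamp_in.
  pose proof (clamp_lipschitz x y); lra.
Qed.

End GProperties.

Lemma tensor_G a1 b1 a2 b2 p1 p2 : 0 <= a1 -> 0 <= a2 ->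
  G a1 b1 p1 -> G a2 b2 p2 -> G (a1 + a2) (b1 + b2) (tensor a1 b1 p1 p2).
Proof.
  intros Ha1 Ha2 G1 G2.
  pose proof (G_codomain_nonneg a1 b1 p1 G1 Ha1).
  pose proof (G_codomain_nonneg a2 b2 p2 G2 Ha2). pose proof (G_at0 a2 b2 p2 G2 Ha2).
  unfold tensor. apply G_intro.
  - intros t Ht. destruct Rle_dec.
    + pose proof (G_range a1 b1 p1 G1 t ltac:(in0_lra)); in0_lra.
    + pose proof (G_range a2 b2 p2 G2 (t - a1) ltac:(in0_lra)); in0_lra.
  - intros s t Hs Ht Hst. destruct (Rle_dec s a1), (Rle_dec t a1); try lra.
    + apply (G_strict a1 b1 p1 G1); in0_lra.
    + pose proof (G_range a1 b1 p1 G1 s ltac:(in0_lra)).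
      pose proof (G_strict a2 b2 p2 G2 0 (t - a1) ltac:(in0_lra) ltac:(in0_lra) ltac:(lra)).
      in0_lra.
    + pose proof (G_strict a2 b2 p2 G2 (s - a1) (t - a1) ltac:(in0_lra) ltac:(in0_lra) ltac:(lra)).
      lra.
  - intros y Hy. destruct (Rle_dec y b1).
    + destruct (G_onto a1 b1 p1 G1 y ltac:(in0_lra)) as [t [Ht Hpt]].
      exists t. split; [in0_lra |]. destruct Rle_dec; [assumption | in0_lra].
    + destruct (G_onto a2 b2 p2 G2 (y - b1) ltac:(in0_lra)) as [u [Hu Hpu]].
      assert (u <> 0) by (intros ->; lra).
      exists (u + a1). split; [in0_lra |].
      destruct Rle_dec; [in0_lra |]. replace (u + a1 - a1) with u by ring. lra.
  - intros t Ht. destruct Rle_dec; [apply G1 |]; lra.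
  - intros t Ht. destruct Rle_dec; [lra |]. rewrite (proj2 (proj2 G2)) by lra. ring.
Qed.

Definition head (s c : R) (f : R -> R) : R -> R :=
  fun x => if Rle_dec x s then f x else c.

Definition tail (s c : R) (f : R -> R) : R -> R :=
  fun x => if Rle_dec x 0 then 0 else f (x + s) - c.

Lemma tensor_head_tail s c f : tensor s c (head s c f) (tail s c f) = f.
Proof.
  apply functional_extensionality. intros x. unfold tensor, head, tail.
  destruct (Rle_dec x s), (Rle_dec (x - s) 0); try reflexivity; try lra.
  replace (x - s + s) with x by ring. ring.
Qed.

Lemma head_tensor a1 b1 p1 p2 : G a1 b1 p1 -> head a1 b1 (tensor a1 b1 p1 p2) = p1.
Proof.
  intros G1. apply functional_extensionality. intros x. unfold head, tensor.
  destruct Rle_dec; [reflexivity |]. symmetry. apply G1. lra.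
Qed.

Lemma tail_tensor a1 b1 a2 b2 p1 p2 : 0 <= a2 -> G a2 b2 p2 ->
  tail a1 b1 (tensor a1 b1 p1 p2) = p2.
Proof.
  intros Ha2 G2. apply functional_extensionality. intros x. unfold tail, tensor.
  destruct Rle_dec.
  - symmetry. apply (G_nonpos a2 b2 p2 G2 Ha2). assumption.
  - destruct Rle_dec; [lra |]. replace (x + a1 - a1) with x by ring. ring.
Qed.

Section Split.
Variables (a b s : R) (f : R -> R).
Hypothesis Hf : G a b f.
Hypothesis Hs : in0 a s.

Lemma head_G : G s (f s) (head s (f s) f).
Proof.
  unfold head. apply G_intro.
  - intros t Ht. destruct Rle_dec; [| in0_lra].
    pose proof (G_range a b f Hf t ltac:(in0_lra)).
    pose proof (G_mono a b f Hf t s ltac:(in0_lra) Hs ltac:(in0_lra)). in0_lra.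
  - intros u v Hu Hv Huv. do 2 (destruct Rle_dec; [| in0_lra]).
    apply (G_strict a b f Hf); in0_lra.
  - intros y Hy. pose proof (G_range a b f Hf s Hs).
    destruct (G_onto a b f Hf y ltac:(in0_lra)) as [t [Ht Hft]].
    assert (t <= s) by (apply (G_le_reflect a b f Hf); [assumption | assumption | in0_lra]).
    exists t. split; [in0_lra |]. destruct Rle_dec; [assumption | lra].
  - intros t Ht. destruct Rle_dec; [| in0_lra]. apply (G_nonpos a b f Hf); in0_lra.
  - intros t Ht. destruct Rle_dec; [lra | reflexivity].
Qed.

Lemma tail_G : G (a - s) (b - f s) (tail s (f s) f).
Proof.
  pose proof (G_range a b f Hf s Hs).
  unfold tail. apply G_intro.
  - intros t Ht. destruct Rle_dec; [in0_lra |].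
    pose proof (G_range a b f Hf (t + s) ltac:(in0_lra)).
    pose proof (G_mono a b f Hf s (t + s) Hs ltac:(in0_lra) ltac:(in0_lra)). in0_lra.
  - intros u v Hu Hv Huv. destruct (Rle_dec u 0), (Rle_dec v 0); try in0_lra.
    + pose proof (G_strict a b f Hf s (v + s) Hs ltac:(in0_lra) ltac:(in0_lra)). lra.
    + pose proof (G_strict a b f Hf (u + s) (v + s) ltac:(in0_lra) ltac:(in0_lra) ltac:(lra)). lra.
  - intros y Hy. destruct (G_onto a b f Hf (y + f s) ltac:(in0_lra)) as [t [Ht Hft]].
    assert (s <= t) by (apply (G_le_reflect a b f Hf); [assumption | assumption | in0_lra]).
    exists (t - s). split; [in0_lra |].
    replace (t - s + s) with t by ring.
    destruct Rle_dec; [| lra].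
    assert (t = s) by lra. subst t. lra.
  - intros t Ht. destruct Rle_dec; [reflexivity | lra].
  - intros t Ht. destruct Rle_dec; [in0_lra |].
    rewrite (G_beyond a b f Hf) by in0_lra. reflexivity.
Qed.

End Split.

Lemma preimage_stable a b y f eta : G a b f -> 0 < y < b -> 0 < eta ->
  exists d, 0 < d /\ forall g, G a b g ->
    (forall t, in0 a t -> Rabs (g t - f t) <= d) ->
    Rabs (preimage a y g - preimage a y f) < eta.
Proof.
  intros Hf Hy He.
  destruct (G_preimage a b f Hf y ltac:(in0_lra)) as [Hs Hfs].
  assert (Ha : 0 <= a) by in0_lra.
  pose proof (G_preimage_interior a b f Hf Ha y Hy).
  set (s := preimage a y f) in *.
  set (p := Rmin a (s + eta)). set (q := Rmax 0 (s - eta)).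
  assert (Hp : in0 a p /\ s < p <= s + eta) by (unfold p, Rmin; destruct Rle_dec; in0_lra).
  assert (Hq : in0 a q /\ s - eta <= q < s) by (unfold q, Rmax; destruct Rle_dec; in0_lra).
  destruct Hp as [Hp Hp_bounds], Hq as [Hq Hq_bounds].
  pose proof (G_strict a b f Hf s p Hs Hp ltac:(lra)).
  pose proof (G_strict a b f Hf q s Hq Hs ltac:(lra)).
  (* g stays above y at p and below y at q, which traps its preimage of y in (q, p). *)
  exists (Rmin (y - f q) (f p - y) / 2). split; [apply Rmin_case; lra |].
  intros g Hg Hclose.
  pose proof (Rmin_l (y - f q) (f p - y)). pose proof (Rmin_r (y - f q) (f p - y)).
  destruct (G_preimage a b g Hg y ltac:(in0_lra)) as [Hsg Hgs].
  pose proof (Rabs_le_inv _ _ (Hclose p Hp)). pose proof (Rabs_le_inv _ _ (Hclose q Hq)).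
  apply Rabs_def1.
  - destruct (Rlt_le_dec (preimage a y g) p) as [| Hle]; [lra |].
    pose proof (G_mono a b g Hg p _ Hp Hsg Hle). lra.
  - destruct (Rlt_le_dec q (preimage a y g)) as [| Hle]; [lra |].
    pose proof (G_mono a b g Hg _ q Hsg Hq Hle). lra.
Qed.

Definition braid (L l1 l2 : R) (f : R -> R) : R -> R :=
  let s := preimage L l1 f in tensor (L - s) l2 (tail s l1 f) (head s l1 f).

Section Braid.
Variables (L l1 l2 : R).
Hypotheses (hL : 0 < L) (h1 : 0 < l1) (h2 : 0 < l2).

Lemma cut_point_spec f : G L (l1 + l2) f ->
  0 < preimage L l1 f < L /\ f (preimage L l1 f) = l1.
Proof.
  intros Hf. split.
  - apply (G_preimage_interior L (l1 + l2) f Hf); lra.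
  - apply (G_preimage L (l1 + l2)); [assumption | in0_lra].
Qed.

Lemma cut_pieces_G f : G L (l1 + l2) f ->
  let s := preimage L l1 f in G s l1 (head s l1 f) /\ G (L - s) l2 (tail s l1 f).
Proof.
  intros Hf s. destruct (cut_point_spec f Hf) as [Hs Hfs]. fold s in Hs, Hfs.
  pose proof (head_G L (l1 + l2) s f Hf ltac:(in0_lra)) as Hhead.
  pose proof (tail_G L (l1 + l2) s f Hf ltac:(in0_lra)) as Htail.
  rewrite Hfs in Hhead, Htail. replace (l1 + l2 - l1) with l2 in Htail by ring.
  split; assumption.
Qed.

Lemma braid_G f : G L (l1 + l2) f -> G L (l2 + l1) (braid L l1 l2 f).
Proof.
  intros Hf. destruct (cut_point_spec f Hf) as [Hs _].
  destruct (cut_pieces_G f Hf) as [Hhead Htail].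
  unfold braid. set (s := preimage L l1 f) in *.
  pose proof (tensor_G (L - s) l2 s l1 _ _ ltac:(lra) ltac:(lra) Htail Hhead) as Hbraid.
  replace (L - s + s) with L in Hbraid by ring. exact Hbraid.
Qed.

Lemma braid_tensor l1' l2' phi1 phi2 : 0 < l1' -> 0 < l2' -> l1' + l2' = L ->
  G l1' l1 phi1 -> G l2' l2 phi2 ->
  braid L l1 l2 (tensor l1' l1 phi1 phi2) = tensor l2' l2 phi2 phi1.
Proof.
  intros H1 H2 HL G1 G2.
  pose proof (tensor_G _ _ _ _ _ _ (Rlt_le _ _ H1) (Rlt_le _ _ H2) G1 G2) as Gt.
  rewrite HL in Gt.
  assert (Hcut : preimage L l1 (tensor l1' l1 phi1 phi2) = l1').
  { apply (G_preimage_eq L (l1 + l2)); [assumption | in0_lra |].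
    unfold tensor. destruct Rle_dec; [| lra]. apply (G_at_end l1' l1 phi1 G1); lra. }
  unfold braid. rewrite Hcut. replace (L - l1') with l2' by lra.
  rewrite head_tensor, (tail_tensor l1' l1 l2' l2) by (assumption || lra). reflexivity.
Qed.

(* A case-free formula, in which the dependence on the cut point is visibly continuous. *)
Lemma braid_eq f t : G L (l1 + l2) f -> in0 L t ->
  braid L l1 l2 f t = f (t + preimage L l1 f) + f (t + preimage L l1 f - L) - l1.
Proof.
  intros Hf Ht. destruct (cut_point_spec f Hf) as [Hs Hfs].
  unfold braid, tensor, head, tail. set (s := preimage L l1 f) in *.
  destruct (Rle_dec t (L - s)).
  - rewrite (G_nonpos L (l1 + l2) f Hf (Rlt_le _ _ hL) (t + s - L)) by lra.
    destruct Rle_dec.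
    + replace t with 0 by in0_lra. rewrite Rplus_0_l, Hfs. ring.
    + ring.
  - destruct Rle_dec; [| in0_lra].
    rewrite (G_beyond L (l1 + l2) f Hf (Rlt_le _ _ hL) (t + s)) by lra.
    replace (t + s - L) with (t - (L - s)) by ring. ring.
Qed.

Lemma braid_sup_continuous : sup_continuous L (l1 + l2) (braid L l1 l2).
Proof.
  intros f Hf eps He.
  destruct (G_unif_cont L (l1 + l2) f Hf (Rlt_le _ _ hL) (eps / 4) ltac:(lra))
    as [eta [Heta Hunif]].
  destruct (preimage_stable L (l1 + l2) l1 f eta Hf ltac:(lra) Heta) as [d0 [Hd0 Hcut]].
  exists (Rmin d0 (eps / 4)). split; [apply Rmin_case; lra |].
  intros g Hg Hclose t Ht.
  pose proof (Rmin_l d0 (eps / 4)). pose proof (Rmin_r d0 (eps / 4)).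
  assert (Hclose' : forall x, Rabs (g x - f x) <= Rmin d0 (eps / 4)).
  { intros x. rewrite <- (G_clamp L (l1 + l2) g Hg (Rlt_le _ _ hL) x),
      <- (G_clamp L (l1 + l2) f Hf (Rlt_le _ _ hL) x).
    apply Hclose, clamp_in; lra. }
  pose proof (Hcut g Hg (fun x Hx => Rle_trans _ _ _ (Hclose x Hx) (Rmin_l _ _))) as Hs.
  rewrite (braid_eq g t Hg Ht), (braid_eq f t Hf Ht).
  set (sg := preimage L l1 g) in *. set (s := preimage L l1 f) in *.
  assert (Hnear : forall x y, x - y = sg - s -> Rabs (g x - f y) < eps / 2).
  { intros x y Hxy. pose proof (Rabs_le_inv _ _ (Hclose' x)).
    pose proof (Rabs_def2 _ _ (Hunif x y ltac:(rewrite Hxy; exact Hs))).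
    apply Rabs_def1; lra. }
  pose proof (Rabs_def2 _ _ (Hnear (t + sg) (t + s) ltac:(ring))).
  pose proof (Rabs_def2 _ _ (Hnear (t + sg - L) (t + s - L) ltac:(ring))).
  apply Rabs_le. lra.
Qed.

End Braid.

Lemma braid_involutive L l1 l2 f : 0 < L -> 0 < l1 -> 0 < l2 ->
  G L (l1 + l2) f -> braid L l2 l1 (braid L l1 l2 f) = f.
Proof.
  intros hL h1 h2 Hf. destruct (cut_point_spec L l1 l2 hL h1 h2 f Hf) as [Hs _].
  destruct (cut_pieces_G L l1 l2 hL h1 h2 f Hf) as [Hhead Htail].
  unfold braid at 2. set (s := preimage L l1 f) in *.
  rewrite (braid_tensor L l2 l1 (L - s) s) by (assumption || lra).
  apply tensor_head_tail.
Qed.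

Theorem proposition4p8 (L l1 l2 : R) (hL : 0 < L) (h1 : 0 < l1) (h2 : 0 < l2) :
  exists B : (R -> R) -> (R -> R),
    braid_prop L l1 l2 B /\
    (forall B' : (R -> R) -> (R -> R), braid_prop L l1 l2 B' ->
       forall f, G L (l1 + l2) f -> B' f = B f) /\
    (* B is a homeomorphism of the space G(L, l1 + l2) = G(L, l2 + l1) *)
    sup_continuous L (l1 + l2) B /\
    exists C : (R -> R) -> (R -> R),
      (forall f, G L (l2 + l1) f -> G L (l1 + l2) (C f)) /\
      (forall f, G L (l1 + l2) f -> C (B f) = f) /\
      (forall f, G L (l2 + l1) f -> B (C f) = f) /\
      sup_continuous L (l2 + l1) C.
Proof.
  exists (braid L l1 l2). split; [| split; [| split]].
  - split; [apply braid_G; assumption |]. intros. apply braid_tensor; assumption.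
  - intros B' [_ HB'] f Hf.
    destruct (cut_point_spec L l1 l2 hL h1 h2 f Hf) as [Hs _].
    destruct (cut_pieces_G L l1 l2 hL h1 h2 f Hf) as [Hhead Htail].
    set (s := preimage L l1 f) in *.
    rewrite <- (tensor_head_tail s l1 f) at 1.
    rewrite (HB' s (L - s)) by (assumption || lra). reflexivity.
  - apply braid_sup_continuous; assumption.
  - exists (braid L l2 l1). split; [| split; [| split]]; intros.
    + apply braid_G; assumption.
    + apply braid_involutive; assumption.
    + apply braid_involutive; assumption.
    + apply braid_sup_continuous; assumption.
Qed.
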